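(* Let $\mathcal{Y}=\{0,1\}$, let $\mathcal{X},\Phi$ be the natural feature construction, and for $n\in\mathbb{N}$ let $T_n=(f_n,\psi_n)$ where $\psi_n(x,x')=f_n$ if $f_n(x)=1,f_n(x')=0$; $\psi_n(x,x')=\neg f_n$ if $f_n(x)=0,f_n(x')=1$; and $\psi_n(x,x')=\bot$ otherwise. Let $\mathcal{T}=\{T_n:n\in\mathbb{N}\}$ and $H=\{(\bar 0,0),(\bar 1,1)\}$. Then $\mathrm{DFFdim}(\mathcal{T},H)=1$, while $\mathrm{Ldim}(\mathrm{DtO}(\mathcal{T},H))=\infty$; moreover there is a Littlestone tree of infinite depth shattered by $\mathrm{DtO}(\mathcal{T},H)$.
   Context: Setting. A teacher over $\mathcal{X},\mathcal{Y},\Phi$ ($\mathcal{Y}$ finite, $\Phi$ a set of Boolean features on $\mathcal{X}$, $\bot$ a null symbol) is a pair $T=(\ell,\psi)$ with $\ell:\mathcal{X}\to\mathcal{Y}$ and $\psi:\mathcal{X}\times\mathcal{X}\to\Phi\cup\{\bot\}$ such that whenever $\ell(x)\neq\ell(\hat x)$, $\phi:=\psi(x,\hat x)\in\Phi$, $\phi(x)=1$ and $\phi(\hat x)=0$. A teacher class is a set of teachers. A history is a non-empty set $H\subseteq\mathcal{X}\times\mathcal{Y}$, $H_{\mathcal{X}}=\{x:\exists y,(x,y)\in H\}$; a teacher $(\ell,\psi)$ is consistent with $H$ if $\ell(x)=y$ for all $(x,y)\in H$; $\mathcal{T}_H$ is the set of teachers in $\mathcal{T}$ consistent with $H$. DFF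 dimension. A DFF tree is a rooted tree whose nodes are triples $\langle y,\phi,x\rangle$ with $y\in\mathcal{Y}\cup\{\bot\}$, $\phi\in\Phi\cup\{\bot\}$, $x\in\mathcal{X}\cup\{\bot\}$, such that the root has $y=\phi=\bot$, a node has $x=\bot$ iff it is a leaf, every edge is labeled by a pair $(\hat x,\hat y)\in\mathcal{X}\times\mathcal{Y}$, and every non-root node $\langle y,\phi,x\rangle$ with incoming edge $(\hat x,\hat y)$ has $\phi\neq\bot$ whenever $y\neq\hat y$. For a parent–child pair $\langle\cdot,\cdot,x\rangle\xrightarrow{(\hat x,\hat y)}\langle y,\phi,\cdot\rangle$ on a path, $(x,y)$ is called a labeled example in that path. A path from the root is consistent with a teacher $(\ell,\psi)$ if for every such parent–child pair on it, $\ell(x)=y$ and, if $y\neq\hat y$, $\psi(x,\hat x)=\phi$. Given $\mathcal{T}$ consistent with $H$, a DFF tree is shattered by $\mathcal{T}$ and $H$ if: (1) every non-root node $\langle y,\phi,x\rangle$ with incoming edge $(\hat x,\hat y)$ has $y\neq\hat y$; (2) the labels of the outgoing edges of each non-leaf node $v$ are exactly the pairs that belong to $H$ or are labeled examples in the path from the root to $v$; (3) every root-to-leaf path is consistent with some teacher in $\mathcal{T}_H$; (4) all root-to-leaf paths have the same number of edges, called the height. $\mathrm{DFFdim}(\mathcal{T},H)$ is the maximal height of a DFF tree shattered by $\mathcal{T}$ and $H$. Natural feature construction: $\mathcal{X}=\{0,1\}^{\mathbb{N}}$, $f_n(x)=x(n)$, $\Phi=\bigcup_{n\in\mathbb{N}}\{f_n,\neg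 f_n\}$ with $\neg f_n=1-f_n$; $\bar 0,\bar 1$ are the all-zero and all-one vectors. $\mathrm{Ldim}$ is the Littlestone dimension: the maximal depth of a complete binary tree whose internal nodes are labeled by examples and whose two outgoing edges at each internal node are labeled by two distinct labels, such that for every root-to-leaf path some function in the class agrees with all (example, edge label) pairs on the path; an infinite-depth tree is shattered if every finite path from the root is realized by some function in the class. Mapping DtO: given $\mathcal{T}$ and $H$, let $\mathcal{X}''=\mathcal{X}\setminus H_{\mathcal{X}}$; then $\mathrm{DtO}(\mathcal{T},H)=\{\ell|_{\mathcal{X}''}:(\ell,\psi)\in\mathcal{T}\}$. *)

From Stdlib Require Import List Arith.
Import ListNotations.

Definition X := nat -> bool.
(* Y = {0,1} is represented by bool (0 = false, 1 = true). *)
Definition Y := bool.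

(* Phi = { f_n, not f_n : n in N } *)
Inductive Feat : Type := FPos (n : nat) | FNeg (n : nat).

Definition feval (phi : Feat) (x : X) : bool :=
  match phi with FPos n => x n | FNeg n => negb (x n) end.

Definition zeroX : X := fun _ => false.
Definition oneX  : X := fun _ => true.

(* a teacher is a pair (l, psi); None plays the role of the null symbol ⊥ *)
Definition teacher := ((X -> Y) * (X -> X -> option Feat))%type.

Definition is_teacher (T : teacher) : Prop :=
  forall x xh, fst T x <> fst T xh ->
    exists phi, snd T x xh = Some phi /\ feval phi x = true /\ feval phi xh = false.

Definition teacher_class := teacher -> Prop.
Definition history := (X * Y) -> Prop.

Definition consistent (T : teacher) (H : history) : Prop :=
  forall x y, H (x, y) -> fst T x = y.

Definition restrict (C : teacher_class) (H : history) : teacher_class :=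
  fun T => C T /\ consistent T H.

Definition histX (H : history) : X -> Prop := fun x => exists y, H (x, y).

(* A node <y, phi, x> together with its list of labeled outgoing edges. *)
Inductive dfftree : Type :=
  DNode : option Y -> option Feat -> option X -> list ((X * Y) * dfftree) -> dfftree.

(* A parent-child step along a path: parent's x, incoming edge label (xh,yh)
   of the child, the child's y and phi. *)
Record step := Step { s_x : X; s_xh : X; s_yh : Y; s_y : option Y; s_phi : option Feat }.

Definition step_consistent (T : teacher) (s : step) : Prop :=
  s_y s = Some (fst T (s_x s)) /\
  (s_y s <> Some (s_yh s) -> snd T (s_x s) (s_xh s) = s_phi s).

Definition path_consistent (T : teacher) (p : list step) : Prop :=
  forall s, In s p -> step_consistent T s.

Definition labeled_example (p : list step) (x : X) (y : Y) : Prop :=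
  exists s, In s p /\ s_x s = x /\ s_y s = Some y.

(* [shattered_from C H p d v]: the subtree rooted at v, reached from the root by
   the path p, satisfies the DFF-tree conditions and conditions (1)-(3) of
   shattering by C and H, and every path from v to a leaf has exactly d edges. *)
Inductive shattered_from (C : teacher_class) (H : history) :
    list step -> nat -> dfftree -> Prop :=
| SLeaf : forall p y phi,
    (exists T, restrict C H T /\ path_consistent T p) ->
    shattered_from C H p 0 (DNode y phi None [])
| SNode : forall p d y phi x ch,
    (* (2): outgoing labels are exactly H ∪ labeled examples of the path *)
    (forall xh yh, (exists c, In ((xh, yh), c) ch) <->
                   (H (xh, yh) \/ labeled_example p xh yh)) ->
    NoDup (map fst ch) ->
    (forall xh yh c, In ((xh, yh), c) ch ->
       exists y' phi' x' ch',
         c = DNode y' phi' x' ch' /\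
         (y' <> Some yh -> phi' <> None) /\
         y' <> Some yh /\
         shattered_from C H (p ++ [Step x xh yh y' phi']) d c) ->
    shattered_from C H p (S d) (DNode y phi (Some x) ch).

Definition dff_shattered (C : teacher_class) (H : history) (t : dfftree) (d : nat) : Prop :=
  exists x ch, t = DNode None None x ch /\ shattered_from C H [] d t.

Definition DFFdim_eq (C : teacher_class) (H : history) (n : nat) : Prop :=
  (exists t, dff_shattered C H t n) /\
  (forall t d, dff_shattered C H t d -> d <= n).

Definition Xpp (H : history) := { x : X | ~ histX H x }.

Definition DtO (C : teacher_class) (H : history) : (Xpp H -> Y) -> Prop :=
  fun h => exists T, C T /\ h = (fun x => fst T (proj1_sig x)).

(* A complete binary Littlestone tree: the internal node reached by following
   the edge labels b (a list of labels from the root) is labeled tr b.  Since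
   Y = {0,1}, the two outgoing edges of a node are labeled 0 and 1. *)
Definition realizes {Z : Type} (h : Z -> Y) (tr : list Y -> Z) (b : list Y) : Prop :=
  forall i, i < length b -> h (tr (firstn i b)) = nth i b false.

(* finite tree of depth d shattered (only nodes of length < d are used) *)
Definition L_shattered_depth {Z : Type} (C : (Z -> Y) -> Prop) (tr : list Y -> Z) (d : nat) : Prop :=
  forall b, length b = d -> exists h, C h /\ realizes h tr b.

Definition L_shattered_inf {Z : Type} (C : (Z -> Y) -> Prop) (tr : list Y -> Z) : Prop :=
  forall b, exists h, C h /\ realizes h tr b.

Definition Ldim_infinite {Z : Type} (C : (Z -> Y) -> Prop) : Prop :=
  forall d, exists tr, L_shattered_depth C tr d.

Definition psi_n (n : nat) (x x' : X) : option Feat :=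
  match x n, x' n with
  | true, false => Some (FPos n)
  | false, true => Some (FNeg n)
  | _, _ => None
  end.

Definition T_n (n : nat) : teacher := (fun x => x n, psi_n n).

Definition Tcls : teacher_class := fun T => exists n, T = T_n n.

Definition H0 : history := fun p => p = (zeroX, false) \/ p = (oneX, true).

From Stdlib Require Import List Arith Lia.
Import ListNotations.

Set Implicit Arguments.

(* Upper bound: T_n can only explain a label change on the edge (0,0) at x by the
   feature f_n, so after one such edge the revealed feature determines the
   teacher.  A single teacher T_n cannot then label the next point x' with a
   value different both from 0 (edge (0,0)) and from 1 (edge (1,1)).
   Infinite Littlestone tree: put the point k |-> bit k of n at depth k; the
   teachers T_n realize every finite bit pattern on these points, and none of
   them is 0 or 1. *)

Section Shattering.

Variables (C : teacher_class) (H : history).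

Lemma shattered_from_S_inv p d t :
  shattered_from C H p (S d) t ->
  exists x, forall xh yh, H (xh, yh) ->
    exists y phi c, y <> Some yh /\
      shattered_from C H (p ++ [Step x xh yh y phi]) d c.
Proof.
  intros Hs; inversion Hs as [|p0 d0 y0 phi0 x ch Hlabels _ Hchildren]; subst.
  exists x; intros xh yh Hxy.
  destruct (proj2 (Hlabels xh yh) (or_introl Hxy)) as [c Hc].
  destruct (Hchildren _ _ _ Hc) as (y & phi & x' & ch' & _ & _ & Hy & Hc').
  eauto.
Qed.

Lemma shattered_from_consistent_teacher xh yh p d t :
  H (xh, yh) -> shattered_from C H p d t ->
  exists T, restrict C H T /\ path_consistent T p.
Proof.
  intros Hxy; revert p t; induction d as [|d IH]; intros p t Hs.
  - inversion Hs; assumption.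
  - destruct (shattered_from_S_inv Hs) as [x Hx].
    destruct (Hx _ _ Hxy) as (y & phi & c & _ & Hc).
    destruct (IH _ _ Hc) as [T [HT Hp]].
    exists T; split; [assumption|].
    intros s Hin; apply Hp, in_or_app; auto.
Qed.

End Shattering.

Lemma step_label_flipped T s :
  step_consistent T s -> s_y s <> Some (s_yh s) -> fst T (s_x s) = negb (s_yh s).
Proof.
  intros [Hy _] Hneq; rewrite Hy in Hneq.
  destruct (fst T (s_x s)), (s_yh s); simpl; congruence.
Qed.

Lemma T_n_feature_against_zero n x y phi :
  step_consistent (T_n n) (Step x zeroX false y phi) -> y <> Some false ->
  phi = Some (FPos n).
Proof.
  intros [Hy Hphi] Hneq; simpl in *.
  rewrite <- (Hphi Hneq); subst y; unfold psi_n, zeroX.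
  destruct (x n); [reflexivity | now contradiction Hneq].
Qed.

Lemma dff_height_le_1 t d : dff_shattered Tcls H0 t d -> d <= 1.
Proof.
  intros [x [ch [_ Hs]]].
  destruct d as [|[|d]]; [lia | lia | exfalso].
  destruct (shattered_from_S_inv Hs) as [x1 Hroot].
  destruct (Hroot zeroX false) as (y1 & phi1 & c & Hy1 & Hc); [left; reflexivity|].
  destruct (shattered_from_S_inv Hc) as [x2 Hchild].
  destruct (Hchild zeroX false) as (y2 & phi2 & c2 & Hy2 & Hc2); [left; reflexivity|].
  destruct (Hchild oneX true) as (y3 & phi3 & c3 & Hy3 & Hc3); [right; reflexivity|].
  destruct (shattered_from_consistent_teacher zeroX false (or_introl eq_refl) Hc2)
    as [T2 [[[n2 ->] _] P2]].
  destruct (shattered_from_consistent_teacher zeroX false (or_introl eq_refl) Hc3)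
    as [T3 [[[n3 ->] _] P3]].
  assert (n2 = n3) as <-.
  { pose proof (T_n_feature_against_zero (P2 _ (or_introl eq_refl)) Hy1).
    pose proof (T_n_feature_against_zero (P3 _ (or_introl eq_refl)) Hy1).
    congruence. }
  pose proof (step_label_flipped (P2 _ (or_intror (or_introl eq_refl))) Hy2).
  pose proof (step_label_flipped (P3 _ (or_intror (or_introl eq_refl))) Hy3).
  simpl in *; congruence.
Qed.

Lemma T_n_restrict n : restrict Tcls H0 (T_n n).
Proof.
  split; [exists n; reflexivity|].
  intros x y [E | E]; injection E as -> ->; reflexivity.
Qed.

Definition indicator0 : X := fun n => Nat.eqb n 0.

(* The leaf below (0,0) is explained by T_0 via f_0, the one below (1,1) by
   T_1 via not f_1. *)
Definition height_one_tree : dfftree :=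
  DNode None None (Some indicator0)
    [((zeroX, false), DNode (Some true) (Some (FPos 0)) None []);
     ((oneX, true), DNode (Some false) (Some (FNeg 1)) None [])].

Lemma height_one_tree_shattered : dff_shattered Tcls H0 height_one_tree 1.
Proof.
  do 2 eexists; split; [reflexivity|].
  constructor.
  - intros xh yh; split.
    + intros [c [E | [E | []]]]; injection E as <- <- _; left; red; auto.
    + intros [[E | E] | [s [[] _]]]; injection E as -> ->; eexists; simpl; eauto.
  - simpl; constructor; [intros [E | []]; discriminate E | constructor; [intros [] | constructor]].
  - intros xh yh c [E | [E | []]]; injection E as <- <- <-;
      do 4 eexists; (split; [reflexivity|]); (split; [discriminate|]);
      (split; [discriminate|]); constructor.
    + exists (T_n 0); split; [apply T_n_restrict|].
      intros s [<- | []]; split; reflexivity.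
    + exists (T_n 1); split; [apply T_n_restrict|].
      intros s [<- | []]; split; reflexivity.
Qed.

Definition bit_point (k : nat) : X := fun n => Nat.testbit n k.

Lemma bit_point_not_history k : ~ histX H0 (bit_point k).
Proof.
  intros [y [E | E]]; injection E as E _.
  - apply (f_equal (fun f => f (2 ^ k))) in E.
    unfold bit_point, zeroX in E; rewrite Nat.pow2_bits_true in E; discriminate.
  - apply (f_equal (fun f => f 0)) in E.
    unfold bit_point, oneX in E; rewrite Nat.bits_0 in E; discriminate.
Qed.

Definition bit_tree (b : list Y) : Xpp H0 :=
  exist _ (bit_point (length b)) (@bit_point_not_history (length b)).

Lemma testbit_prefix (b : list bool) :
  exists n, forall k, k < length b -> Nat.testbit n k = nth k b false.
Proof.
  induction b as [|a b [n Hn]]; [exists 0; simpl; lia|].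
  exists (2 * n + Nat.b2n a); intros [|k] Hk.
  - apply Nat.testbit_0_r.
  - rewrite Nat.testbit_succ_r; apply Hn; simpl in Hk; lia.
Qed.

Lemma bit_tree_shattered_inf : L_shattered_inf (DtO Tcls H0) bit_tree.
Proof.
  intros b; destruct (testbit_prefix b) as [n Hn].
  exists (fun x => fst (T_n n) (proj1_sig x)); split.
  - exists (T_n n); split; [exists n|]; reflexivity.
  - intros i Hi; simpl; unfold bit_point.
    rewrite firstn_length_le by lia; auto.
Qed.

Lemma L_shattered_inf_Ldim_infinite {Z : Type} (C : (Z -> Y) -> Prop) tr :
  L_shattered_inf C tr -> Ldim_infinite C.
Proof. intros Hinf d; exists tr; intros b _; apply Hinf. Qed.

Theorem mainTheorem11 :
  DFFdim_eq Tcls H0 1 /\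
  Ldim_infinite (DtO Tcls H0) /\
  (exists tr : list Y -> Xpp H0, L_shattered_inf (DtO Tcls H0) tr).
Proof.
  split; [split|split].
  - exists height_one_tree; apply height_one_tree_shattered.
  - apply dff_height_le_1.
  - exact (L_shattered_inf_Ldim_infinite bit_tree_shattered_inf).
  - exists bit_tree; exact bit_tree_shattered_inf.
Qed.
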